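(* Let $\mathcal{X}=\{x_0,x_1\}$, $\mathcal{Y}=\{0,1\}$, $\mathcal{H}=\{h_0,h_1\}$ with $h_0(x_0)=h_1(x_0)$, $h_0(x_1)=0$, $h_1(x_1)=1$. Let $\delta\in(0,1)$, $n\in\mathbb{N}$, $\epsilon=\sqrt{\log(1/\delta)/n}$ with $\epsilon<1/2$. For $\sigma\in\{0,1\}$ let $P^\sigma$ be the distribution with $P^\sigma_X(x_1)=1$, $P^\sigma(Y=\sigma\mid X=x_1)=1/2+\epsilon$, and $Q$ the distribution with $Q_X(x_1)=1$, $Q(Y=1\mid X=x_1)=1/2$. Draw $\sigma\sim\mathrm{Unif}(\{0,1\})$ and $t^*\sim\mathrm{Unif}([N])$ independently; then, independently for each $t\in[N]$, draw a dataset $Z_t$ of $n$ i.i.d. samples from $P^\sigma$ if $t=t^*$ and from $Q$ otherwise, and set $Z=(Z_1,\dots,Z_N)$. If $N\ge\delta^{-8}$, then for every learning algorithm $\mathcal{A}$ that maps $Z$ to an element of $\mathcal{H}$ (with no other input), $\mathbb{P}(\mathcal{A}(Z)\neq h_\sigma)\ge (2-\sqrt2)/4$, where $h_\sigma$ is the element of $\mathcal{H}$ with $h_\sigma(x_1)=\sigma$ (the common optimal classifier).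
   Context: The probability is over $\sigma$, $t^*$, and the samples. The target distribution is $\mathcal{D}=P^\sigma$. *)

From HB Require Import structures.
From mathcomp Require Import all_boot all_order all_algebra.
From mathcomp Require Import reals exp.
Set Implicit Arguments. Unset Strict Implicit. Unset Printing Implicit Defensive.
Import Order.TTheory GRing.Theory Num.Theory.
Local Open Scope ring_scope.

(* Instance space X = {x0, x1} encoded as bool: x0 = false, x1 = true.
   Label space Y = {0,1} encoded as bool.  A sample is a pair (x, y). *)
Definition x0 : bool := false.
Definition x1 : bool := true.

(* Hypothesis class H = {h_0, h_1}, indexed by bool:
   h_s x1 = s, and h_0 x0 = h_1 x0 (common value fixed to 0). *)
Definition hyp (s : bool) (x : bool) : bool := if x == x1 then s else false.

Definition dataset (N n : nat) := {ffun 'I_N -> {ffun 'I_n -> bool * bool}}.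

Definition eps {R : realType} (delta : R) (n : nat) : R :=
  Num.sqrt (ln (delta^-1) / n%:R).

(* Probability mass of one sample z = (x, y) in dataset t, given sigma and t*:
   P^sigma if t = t*, Q otherwise.  Both put all X-mass on x1. *)
Definition sample_pmf {R : realType} (e : R) (sigma : bool) (N : nat)
  (tstar t : 'I_N) (z : bool * bool) : R :=
  if z.1 == x1 then
    (if t == tstar then (if z.2 == sigma then 1/2 + e else 1/2 - e)
     else 1/2)
  else 0.

(* The algorithm A outputs the index s of the hypothesis h_s in H. *)
Definition err_prob {R : realType} (delta : R) (N n : nat)
  (A : dataset N n -> bool) : R :=
  \sum_(sigma : bool) \sum_(tstar : 'I_N) \sum_(Z : dataset N n)
    (1/2 * N%:R^-1 *
     (\prod_(t : 'I_N) \prod_(i : 'I_n) sample_pmf (eps delta n) sigma tstar t (Z t i)))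
    * ([exists x : bool, hyp (A Z) x != hyp sigma x])%:R.

From HB Require Import structures.
From mathcomp Require Import all_boot all_order all_algebra.
From mathcomp Require Import reals exp sequences.
From mathcomp Require Import ring lra.
Import Order.TTheory GRing.Theory Num.Theory.
Local Open Scope ring_scope.

(* Change of measure to the reference distribution Q^{N n}: the error of an
   algorithm A is (2N)^-1 E_Q[K_{~~A}], hence at least (2N)^-1 E_Q[min(K_1, K_0)],
   where K_a is the sum over t of the likelihood ratio against Q of the law
   with block t drawn from P^a.  Both K_a have Q-mean N, and since the ratios of
   different blocks are Q-orthogonal, the second moment of K_1 - K_0 is
   2N((1 + 4 eps^2)^n - (1 - 4 eps^2)^n) <= 2N delta^-4 <= 2N^2.  Hence
   E_Q|K_1 - K_0| <= sqrt 2 N and E_Q[min(K_1, K_0)] >= N - N / sqrt 2. *)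

Lemma sum_dataset_prod {R : comPzSemiRingType} (N n : nat) (f : 'I_N -> bool * bool -> R) :
  \sum_(Z : dataset N n) \prod_t \prod_i f t (Z t i) = \prod_t (\sum_y f t y) ^+ n.
Proof.
rewrite -(bigA_distr_bigA (fun t (z : {ffun 'I_n -> bool * bool}) => \prod_i f t (z i))).
apply: eq_bigr => t _.
by rewrite -(bigA_distr_bigA (fun (i : 'I_n) y => f t y)) /= prodr_const card_ord.
Qed.

Lemma sum_bool_pair {V : nmodType} (F : bool * bool -> V) :
  \sum_y F y = F (true, true) + F (true, false) + (F (false, true) + F (false, false)).
Proof.
transitivity (\sum_i \sum_j F (i, j)).
  by rewrite pair_big; apply: eq_big => [[]|[] []].
by rewrite !big_bool /= addrA.
Qed.

Lemma hyp_differ (a b : bool) : [exists x : bool, hyp a x != hyp b x] = (a != b).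
Proof.
apply/existsP/idP => [[x]|ne]; last by exists x1; rewrite /hyp eqxx.
by rewrite /hyp; case: (x == x1) => //; case: (eqVneq a b) => // ->; rewrite eqxx.
Qed.

Section LikelihoodRatios.

Variables (R : realType) (e : R) (N n : nat).

Definition ref_pmf (z : bool * bool) : R := if z.1 then 1/2 else 0.

(* The ratio P^a(z) / Q(z) on the support {x1} of Q. *)
Definition lr_factor (a : bool) (z : bool * bool) : R :=
  if z.2 == a then 1 + 2 * e else 1 - 2 * e.

Definition ref_density (Z : dataset N n) : R := \prod_t \prod_i ref_pmf (Z t i).

Definition lik_ratio (a : bool) (t : 'I_N) (Z : dataset N n) : R :=
  \prod_i lr_factor a (Z t i).

Definition mix_lik_ratio (a : bool) (Z : dataset N n) : R := \sum_t lik_ratio a t Z.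

Lemma ref_pmf_sum : \sum_y ref_pmf y = 1.
Proof. by rewrite sum_bool_pair /ref_pmf /=; field. Qed.

Lemma ref_pmf_lr (u a : bool) :
  \sum_y ref_pmf y * (if u then lr_factor a y else 1) = 1.
Proof. by rewrite sum_bool_pair /ref_pmf /lr_factor; case: u a => [] [] /=; field. Qed.

Lemma ref_pmf_lr2 (u v a b : bool) :
  \sum_y ref_pmf y * ((if u then lr_factor a y else 1) * (if v then lr_factor b y else 1)) =
  if u && v then (if a == b then 1 + 4 * e ^+ 2 else 1 - 4 * e ^+ 2) else 1.
Proof. by rewrite sum_bool_pair /ref_pmf /lr_factor; case: u v a b => [] [] [] [] /=; field. Qed.

Lemma ref_density_ge0 (Z : dataset N n) : 0 <= ref_density Z.
Proof.
apply: prodr_ge0 => t _; apply: prodr_ge0 => i _.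
by rewrite /ref_pmf; case: (Z t i).1; lra.
Qed.

Lemma ref_expect_prod (w : 'I_N -> bool * bool -> R) :
  \sum_(Z : dataset N n) ref_density Z * \prod_s \prod_i w s (Z s i) =
  \prod_s (\sum_y ref_pmf y * w s y) ^+ n.
Proof.
rewrite -(sum_dataset_prod N n (fun s y => ref_pmf y * w s y)).
apply: eq_bigr => Z _; rewrite /ref_density -big_split /=.
by apply: eq_bigr => s _; rewrite -big_split.
Qed.

Lemma ref_density_sum : \sum_(Z : dataset N n) ref_density Z = 1.
Proof.
transitivity (\sum_(Z : dataset N n) ref_density Z * \prod_(s : 'I_N) \prod_(i : 'I_n) 1).
  by apply: eq_bigr => Z _; rewrite big1 ?mulr1 // => s _; rewrite big1.
rewrite (ref_expect_prod (fun _ _ => 1)); apply: big1 => s _.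
by under eq_bigr do rewrite mulr1; rewrite ref_pmf_sum expr1n.
Qed.

Lemma lik_ratioE (a : bool) (t : 'I_N) (Z : dataset N n) :
  lik_ratio a t Z = \prod_s \prod_i (if s == t then lr_factor a (Z s i) else 1).
Proof.
rewrite (bigD1 t) //= [X in _ * X]big1 ?mulr1.
  by apply: eq_bigr => i _; rewrite eqxx.
by move=> s /negbTE hs; apply: big1 => i _; rewrite hs.
Qed.

Lemma ref_expect_lik_ratio (a : bool) (t : 'I_N) :
  \sum_(Z : dataset N n) ref_density Z * lik_ratio a t Z = 1.
Proof.
under eq_bigr do rewrite lik_ratioE.
rewrite (ref_expect_prod (fun s y => if s == t then lr_factor a y else 1)).
by apply: big1 => s _; rewrite ref_pmf_lr expr1n.
Qed.

Lemma ref_expect_lik_ratio2 (a b : bool) (t t' : 'I_N) :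
  \sum_(Z : dataset N n) ref_density Z * (lik_ratio a t Z * lik_ratio b t' Z) =
  if t == t' then (if a == b then (1 + 4 * e ^+ 2) ^+ n else (1 - 4 * e ^+ 2) ^+ n)
  else 1.
Proof.
under eq_bigr do rewrite !lik_ratioE -big_split /=.
under eq_bigr do under eq_bigr do rewrite -big_split /=.
rewrite (ref_expect_prod (fun s y =>
  (if s == t then lr_factor a y else 1) * (if s == t' then lr_factor b y else 1))).
under eq_bigr do rewrite ref_pmf_lr2.
have [<-|ne] := eqVneq t t'.
  rewrite (bigD1 t) //= eqxx [X in _ * X]big1 ?mulr1; first by case: (a == b).
  by move=> s /negbTE ->; rewrite expr1n.
apply: big1 => s _.
by case: (eqVneq s t) => [->|]; rewrite ?(negbTE ne) ?andbF ?expr1n.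
Qed.

Lemma ref_expect_lik_gap2 (t t' : 'I_N) :
  \sum_(Z : dataset N n) ref_density Z *
    ((lik_ratio true t Z - lik_ratio false t Z) *
     (lik_ratio true t' Z - lik_ratio false t' Z)) =
  if t == t' then 2 * ((1 + 4 * e ^+ 2) ^+ n - (1 - 4 * e ^+ 2) ^+ n) else 0.
Proof.
transitivity (\sum_(Z : dataset N n)
   (ref_density Z * (lik_ratio true t Z * lik_ratio true t' Z)
  - ref_density Z * (lik_ratio true t Z * lik_ratio false t' Z)
  - ref_density Z * (lik_ratio false t Z * lik_ratio true t' Z)
  + ref_density Z * (lik_ratio false t Z * lik_ratio false t' Z))).
  by apply: eq_bigr => Z _; ring.
rewrite big_split /= !sumrB !ref_expect_lik_ratio2 /=.
by case: (t == t'); ring.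
Qed.

Lemma ref_expect_mix (a : bool) :
  \sum_(Z : dataset N n) ref_density Z * mix_lik_ratio a Z = N%:R.
Proof.
under eq_bigr do rewrite /mix_lik_ratio mulr_sumr.
rewrite exchange_big /=.
under eq_bigr do rewrite ref_expect_lik_ratio.
by rewrite sumr_const card_ord.
Qed.

Lemma ref_expect_mix_gap2 :
  \sum_(Z : dataset N n) ref_density Z * (mix_lik_ratio true Z - mix_lik_ratio false Z) ^+ 2 =
  N%:R * (2 * ((1 + 4 * e ^+ 2) ^+ n - (1 - 4 * e ^+ 2) ^+ n)).
Proof.
transitivity (\sum_(Z : dataset N n) \sum_t \sum_t' ref_density Z *
    ((lik_ratio true t Z - lik_ratio false t Z) *
     (lik_ratio true t' Z - lik_ratio false t' Z))).
  apply: eq_bigr => Z _.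
  rewrite /mix_lik_ratio -sumrB expr2 mulr_suml mulr_sumr; apply: eq_bigr => t _.
  by rewrite !mulr_sumr.
rewrite exchange_big /=; under eq_bigr do rewrite exchange_big /=.
under eq_bigr do under eq_bigr do rewrite ref_expect_lik_gap2.
rewrite (eq_bigr (fun=> 2 * ((1 + 4 * e ^+ 2) ^+ n - (1 - 4 * e ^+ 2) ^+ n))).
  by rewrite sumr_const card_ord [RHS]mulr_natl.
move=> t _.
by rewrite (bigD1 t) //= eqxx big1 ?addr0 // => s /negbTE; rewrite eq_sym => ->.
Qed.

Lemma sample_pmfE (sigma : bool) (tstar t : 'I_N) (z : bool * bool) :
  sample_pmf e sigma tstar t z = ref_pmf z * (if t == tstar then lr_factor sigma z else 1).
Proof.
case: z => [[] y]; rewrite /sample_pmf /ref_pmf /lr_factor /x1 /= ?mul0r //.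
by case: (t == tstar); [case: (y == sigma); field | rewrite mulr1].
Qed.

Lemma prod_sample_pmfE (sigma : bool) (tstar : 'I_N) (Z : dataset N n) :
  \prod_t \prod_i sample_pmf e sigma tstar t (Z t i) =
  ref_density Z * lik_ratio sigma tstar Z.
Proof.
rewrite lik_ratioE /ref_density -big_split /=; apply: eq_bigr => t _.
by rewrite -big_split; apply: eq_bigr => i _; rewrite sample_pmfE.
Qed.

End LikelihoodRatios.

Arguments ref_pmf {R}.
Arguments ref_density {R N n}.
Arguments lik_ratio {R} e {N n}.
Arguments mix_lik_ratio {R} e {N n}.

Lemma err_probE {R : realType} (delta : R) (N n : nat) (A : dataset N n -> bool) :
  err_prob delta A = (2 * N%:R)^-1 * \sum_(Z : dataset N n) ref_density Z *
    (if A Z then mix_lik_ratio (eps delta n) false Z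
     else mix_lik_ratio (eps delta n) true Z).
Proof.
rewrite /err_prob.
under eq_bigr do under eq_bigr do under eq_bigr do rewrite prod_sample_pmfE hyp_differ.
under eq_bigr do rewrite exchange_big /=.
rewrite exchange_big /= mulr_sumr; apply: eq_bigr => Z _.
rewrite big_bool /mix_lik_ratio invfM.
by case: (A Z) => /=; rewrite !mulr_sumr -big_split /=; apply: eq_bigr => t _ /=; ring.
Qed.

(* AM-GM in the form [|a - b| <= ((a - b)^2 + k^2) / (2 k)]. *)
Lemma choice_ge_mean_sub_sq {R : realFieldType} (a b k : R) (c : bool) : 0 < k ->
  (a + b) / 2 - ((a - b) ^+ 2 + k ^+ 2) / (4 * k) <= (if c then b else a).
Proof.
move=> k0; set m := ((a - b) ^+ 2 + k ^+ 2) / (2 * k).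
have amgm : `|a - b| <= m.
  rewrite ler_pdivlMr ?mulr_gt0 // -(real_normK (num_real (a - b))).
  have : 0 <= (`|a - b| - k) ^+ 2 by apply: sqr_ge0.
  nra.
have -> : ((a - b) ^+ 2 + k ^+ 2) / (4 * k) = m / 2 by rewrite /m; field; exact: lt0r_neq0.
have := ler_norm (a - b); have := ler_norm (b - a); rewrite distrC.
by case: c; lra.
Qed.

Lemma expect_choice_ge {R : realFieldType} {T : finType} {q X Y : T -> R}
    (c : T -> bool) {mX mY s : R} :
  (forall z, 0 <= q z) -> \sum_z q z = 1 ->
  \sum_z q z * X z = mX -> \sum_z q z * Y z = mY ->
  0 < s -> \sum_z q z * (X z - Y z) ^+ 2 <= s ^+ 2 ->
  (mX + mY) / 2 - s / 2 <= \sum_z q z * (if c z then Y z else X z).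
Proof.
move=> q0 q1 EX EY s0 V.
have pointwise z : q z * ((X z + Y z) / 2) - q z * ((X z - Y z) ^+ 2 + s ^+ 2) / (4 * s)
    <= q z * (if c z then Y z else X z).
  by rewrite -mulrA -mulrBr ler_wpM2l // choice_ge_mean_sub_sq.
apply: le_trans (ler_sum _ (fun z _ => pointwise z)); rewrite sumrB.
have -> : \sum_z q z * ((X z + Y z) / 2) = (mX + mY) / 2.
  by rewrite -EX -EY -big_split mulr_suml; apply: eq_bigr => z _ /=; ring.
have -> : \sum_z q z * ((X z - Y z) ^+ 2 + s ^+ 2) / (4 * s) =
          (\sum_z q z * (X z - Y z) ^+ 2 + s ^+ 2) / (4 * s).
  transitivity ((\sum_z q z * (X z - Y z) ^+ 2 + s ^+ 2 * \sum_z q z) / (4 * s)).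
    by rewrite mulr_sumr -big_split mulr_suml; apply: eq_bigr => z _ /=; ring.
  by rewrite q1 mulr1.
rewrite lerD2l lerN2 ler_pdivrMr ?mulr_gt0 //.
have -> : s / 2 * (4 * s) = s ^+ 2 + s ^+ 2 by rewrite expr2; field.
by rewrite lerD2r.
Qed.

Lemma lr_moment_le {R : realType} (delta : R) (n : nat) :
  0 < delta -> delta < 1 -> (0 < n)%N ->
  (1 + 4 * eps delta n ^+ 2) ^+ n <= delta ^- 4.
Proof.
move=> d0 d1 n0.
have lnd0 : 0 <= ln (delta^-1) by rewrite ln_ge0 // invf_ge1 // ltW.
have eps2 : eps delta n ^+ 2 = ln (delta^-1) / n%:R by rewrite sqr_sqrtr // divr_ge0.
apply: (le_trans (y := expR (4 * eps delta n ^+ 2) ^+ n)).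
  by apply: lerXn2r; rewrite ?nnegrE ?expR_ge1Dx ?expR_ge0 ?addr_ge0 ?mulr_ge0 ?sqrtr_ge0.
rewrite -expRM_natl eps2 (_ : n%:R * (4 * (ln delta^-1 / n%:R)) = 4%:R * ln delta^-1).
  by rewrite expRM_natl lnK ?posrE ?invr_gt0 // exprVn.
by field; rewrite pnatr_eq0 -lt0n.
Qed.

Theorem theorem4p2 (R : realType) (delta : R) (n N : nat)
  (hdelta0 : 0 < delta) (hdelta1 : delta < 1) (hn : (0 < n)%N)
  (heps : eps delta n < 1/2)
  (hN : delta ^- 8 <= N%:R)
  (A : dataset N n -> bool) :
  (2 - Num.sqrt 2) / 4 <= err_prob delta A.
Proof.
set e := eps delta n in heps *; have e0 : 0 <= e by apply: sqrtr_ge0.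
have N0 : 0 < N%:R :> R.
  by apply: lt_le_trans hN; rewrite invr_gt0 exprn_gt0.
have moment : (1 + 4 * e ^+ 2) ^+ n <= N%:R.
  apply: (le_trans (lr_moment_le delta n hdelta0 hdelta1 hn)); apply: le_trans hN.
  by rewrite -!exprVn ler_weXn2l // invf_ge1 // ltW.
have gap2 : \sum_(Z : dataset N n) ref_density Z *
    (mix_lik_ratio e true Z - mix_lik_ratio e false Z) ^+ 2 <= (Num.sqrt 2 * N%:R) ^+ 2.
  rewrite ref_expect_mix_gap2 exprMn (@sqr_sqrtr _ 2) ?ler0n //.
  have : 0 <= (1 - 4 * e ^+ 2) ^+ n by apply: exprn_ge0; nra.
  nra.
have s0 : 0 < Num.sqrt 2 * N%:R :> R by rewrite mulr_gt0 ?sqrtr_gt0.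
have := expect_choice_ge A (@ref_density_ge0 R N n) (ref_density_sum R N n)
  (ref_expect_mix R e N n true) (ref_expect_mix R e N n false)
  s0 gap2.
rewrite err_probE -/e -(ler_pM2l (_ : 0 < (2 * N%:R)^-1)) ?invr_gt0 ?mulr_gt0 //.
apply: le_trans; rewrite le_eqVlt; apply/orP; left; apply/eqP.
by field; rewrite pnatr_eq0 -lt0n -(ltr0n R).
Qed.
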